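(* Let $R\in(0,\pi/2)$ and consider on $(0,\pi)$ the system $\boldsymbol f'=A\boldsymbol f$ with \[A=\frac{1}{\sin s}\begin{pmatrix}-3\cos s&3\cos s\\ \cos R-\cos s&\cos s-\cos R\end{pmatrix}.\] Then a fundamental matrix of solutions (whose columns are solutions) is \[\boldsymbol\phi(s)=\begin{pmatrix}1&(1-\cos R\cos s+\cos^2s)\csc^2s\,(\cot\frac s2)^{\cos R}\\ 1&(\cos^2s-\cos R\cos s-\frac13\sin^2R)\csc^2s\,(\cot\frac s2)^{\cos R}\end{pmatrix}.\] Moreover, if $\boldsymbol f=(f_1,f_2)$ is the solution with $\boldsymbol f(R)\sin^4R=\cos R\,(3,2)$ and $h(s):=f_2(s)\sin^3s$, then \[h(s)=\underline c\Big\{(1+2\csc^2R)\sin^3s+\big(\cos^2s-\cos R\cos s-\tfrac13\sin^2R\big)\sin s\Big(\frac{\cot(s/2)}{\cot(R/2)}\Big)^{\cos R}\Big\},\qquad \underline c:=\frac{3\cos R\csc^2R}{3+\sin^2R}.\] *)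

From Stdlib Require Import Reals.
Open Scope R_scope.

Definition csc (x : R) : R := / sin x.
Definition cot (x : R) : R := cos x / sin x.

Definition A11 (R0 s : R) : R := (- 3 * cos s) / sin s.
Definition A12 (R0 s : R) : R := (3 * cos s) / sin s.
Definition A21 (R0 s : R) : R := (cos R0 - cos s) / sin s.
Definition A22 (R0 s : R) : R := (cos s - cos R0) / sin s.

Definition is_solution (R0 : R) (f1 f2 : R -> R) : Prop :=
  forall s, 0 < s < PI ->
    derivable_pt_lim f1 s (A11 R0 s * f1 s + A12 R0 s * f2 s) /\
    derivable_pt_lim f2 s (A21 R0 s * f1 s + A22 R0 s * f2 s).

(* Entries of the proposed fundamental matrix phi(s);
   (cot (s/2))^(cos R) is the real power, cot(s/2) > 0 on (0,pi). *)
Definition phi11 (R0 s : R) : R := 1.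
Definition phi21 (R0 s : R) : R := 1.
Definition phi12 (R0 s : R) : R :=
  (1 - cos R0 * cos s + (cos s)^2) * (csc s)^2 * Rpower (cot (s/2)) (cos R0).
Definition phi22 (R0 s : R) : R :=
  ((cos s)^2 - cos R0 * cos s - / 3 * (sin R0)^2) * (csc s)^2
    * Rpower (cot (s/2)) (cos R0).

Definition fundamental_matrix (R0 : R) : Prop :=
  is_solution R0 (phi11 R0) (phi21 R0) /\
  is_solution R0 (phi12 R0) (phi22 R0) /\
  (forall s, 0 < s < PI -> phi11 R0 s * phi22 R0 s - phi12 R0 s * phi21 R0 s <> 0).

Definition c_under (R0 : R) : R :=
  3 * cos R0 * (csc R0)^2 / (3 + (sin R0)^2).

Definition h_formula (R0 s : R) : R :=
  c_under R0 * ((1 + 2 * (csc R0)^2) * (sin s)^3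
    + ((cos s)^2 - cos R0 * cos s - / 3 * (sin R0)^2) * sin s
      * Rpower (cot (s/2) / cot (R0/2)) (cos R0)).

From Coquelicot Require Import Coquelicot.
From Stdlib Require Import Reals Lra.
Open Scope R_scope.

(* The rows of A sum to zero, so (1,1) is a solution.  For any solution f,
   f1 - f2 is, up to sign, its Wronskian against (1,1), and
   tr A = -(2 cos s + cos R)/sin s, so by Liouville's formula (f1 - f2) sin^2 s / cot(s/2)^(cos R) is constant;
   since moreover f2' = (cos R - cos s)/sin s (f1 - f2), the second component
   of a solution is determined by this constant and its value at one point.
   The second column of phi has phi12 - phi22 = (1 + sin^2 R/3) csc^2 s
   cot(s/2)^(cos R), so subtracting the right multiple of it leaves a
   solution with equal, hence constant, components; the initial data at R
   fix the multiple and the constant, which yields h. *)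

Lemma eq_of_pythagorean_defect (x a b u : R) :
  a - b = (sin x ^ 2 + cos x ^ 2 - 1) * u -> a = b.
Proof.
  intros Hab. rewrite <- (sin2_cos2 x) in Hab. unfold Rsqr in Hab. lra.
Qed.

Lemma sin_gt_0_open (s : R) : 0 < s < PI -> 0 < sin s.
Proof. intros Hs. apply sin_gt_0; lra. Qed.

Definition cot_half_pow (a s : R) : R := Rpower (cot (s / 2)) a.

Lemma cot_half_pow_gt_0 (a s : R) : 0 < cot_half_pow a s.
Proof. apply exp_pos. Qed.

Lemma is_derive_cot_half_pow (a s : R) : 0 < s < PI ->
  is_derive (cot_half_pow a) s (- a * cot_half_pow a s / sin s).
Proof.
  intros Hs.
  assert (Hsin : 0 < sin (s / 2)) by (apply sin_gt_0; lra).
  assert (Hcos : 0 < cos (s / 2)) by (apply cos_gt_0; lra).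
  unfold cot_half_pow, Rpower, cot.
  auto_derive.
  - repeat split; try lra. apply Rdiv_lt_0_compat; lra.
  - assert (Hsin2 : sin s = 2 * sin (s / 2) * cos (s / 2))
      by (rewrite <- sin_2a; f_equal; field).
    rewrite Hsin2. unfold Rdiv.
    apply (eq_of_pythagorean_defect (s * / 2) _ _
             (- a * exp (a * ln (cos (s * / 2) * / sin (s * / 2)))
                  * / (2 * sin (s * / 2) * cos (s * / 2)))).
    field. lra.
Qed.

Lemma cot_half_pow_div (a s t : R) : 0 < s < PI -> 0 < t < PI ->
  Rpower (cot (s / 2) / cot (t / 2)) a = cot_half_pow a s / cot_half_pow a t.
Proof.
  intros Hs Ht.
  assert (Hcot : forall x, 0 < x < PI -> 0 < cot (x / 2)).
  { intros x Hx. apply Rdiv_lt_0_compat; [apply cos_gt_0 | apply sin_gt_0]; lra. }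
  unfold cot_half_pow, Rpower.
  rewrite ln_div, Rmult_minus_distr_l by auto.
  unfold Rminus. rewrite exp_plus, exp_Ropp. reflexivity.
Qed.

Lemma Derive_eta_of_is_derive (f : R -> R) (x l : R) :
  is_derive f x l -> Derive (fun y => f y) x = l.
Proof. apply is_derive_unique. Qed.

Lemma eq_of_is_derive_0_open (F : R -> R) :
  (forall t, 0 < t < PI -> is_derive F t 0) ->
  forall x y, 0 < x < PI -> 0 < y < PI -> F x = F y.
Proof.
  intros HF x y Hx Hy.
  destruct (Rtotal_order x y) as [Hxy | [-> | Hyx]]; [| reflexivity |].
  - apply eq_is_derive; [intros t Ht; apply HF; lra | exact Hxy].
  - symmetry. apply eq_is_derive; [intros t Ht; apply HF; lra | exact Hyx].
Qed.

Section System.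

Variable R0 : R.

Lemma is_solution_const (a : R) : is_solution R0 (fun _ => a) (fun _ => a).
Proof.
  intros s _. split.
  - replace (A11 R0 s * a + A12 R0 s * a) with 0 by (unfold A11, A12, Rdiv; ring).
    apply derivable_pt_lim_const.
  - replace (A21 R0 s * a + A22 R0 s * a) with 0 by (unfold A21, A22, Rdiv; ring).
    apply derivable_pt_lim_const.
Qed.

Lemma is_solution_add_scal (f1 f2 g1 g2 : R -> R) (b : R) :
  is_solution R0 f1 f2 -> is_solution R0 g1 g2 ->
  is_solution R0 (fun s => f1 s + b * g1 s) (fun s => f2 s + b * g2 s).
Proof.
  intros Hf Hg s Hs.
  destruct (Hf s Hs) as [Df1 Df2], (Hg s Hs) as [Dg1 Dg2].
  split.
  - replace (A11 R0 s * (f1 s + b * g1 s) + A12 R0 s * (f2 s + b * g2 s))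
      with ((A11 R0 s * f1 s + A12 R0 s * f2 s) + b * (A11 R0 s * g1 s + A12 R0 s * g2 s))
      by ring.
    exact (derivable_pt_lim_plus _ _ _ _ _ Df1 (derivable_pt_lim_scal _ b _ _ Dg1)).
  - replace (A21 R0 s * (f1 s + b * g1 s) + A22 R0 s * (f2 s + b * g2 s))
      with ((A21 R0 s * f1 s + A22 R0 s * f2 s) + b * (A21 R0 s * g1 s + A22 R0 s * g2 s))
      by ring.
    exact (derivable_pt_lim_plus _ _ _ _ _ Df2 (derivable_pt_lim_scal _ b _ _ Dg2)).
Qed.

Lemma phi12_sub_phi22 (s : R) :
  phi12 R0 s - phi22 R0 s = (1 + / 3 * sin R0 ^ 2) * csc s ^ 2 * cot_half_pow (cos R0) s.
Proof. unfold phi12, phi22, cot_half_pow. ring. Qed.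

Lemma one_add_third_sin2_gt_0 : 0 < 1 + / 3 * sin R0 ^ 2.
Proof. pose proof (pow2_ge_0 (sin R0)). lra. Qed.

Lemma det_phi_neq_0 (s : R) : 0 < s < PI ->
  phi11 R0 s * phi22 R0 s - phi12 R0 s * phi21 R0 s <> 0.
Proof.
  intros Hs. pose proof (sin_gt_0_open s Hs) as Hsin.
  pose proof (cot_half_pow_gt_0 (cos R0) s) as HP.
  pose proof one_add_third_sin2_gt_0 as Hk.
  unfold phi11, phi21.
  replace (1 * phi22 R0 s - phi12 R0 s * 1) with (- (phi12 R0 s - phi22 R0 s)) by ring.
  rewrite phi12_sub_phi22. unfold csc.
  assert (0 < (1 + / 3 * sin R0 ^ 2) * (/ sin s) ^ 2 * cot_half_pow (cos R0) s).
  { apply Rmult_lt_0_compat; [apply Rmult_lt_0_compat |]; auto.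
    apply pow_lt, Rinv_0_lt_compat, Hsin. }
  lra.
Qed.

Lemma is_solution_phi2 : is_solution R0 (phi12 R0) (phi22 R0).
Proof.
  intros s Hs. pose proof (sin_gt_0_open s Hs) as Hsin.
  pose proof (Derive_eta_of_is_derive _ _ _ (is_derive_cot_half_pow (cos R0) s Hs)) as DP.
  change (phi12 R0) with (fun s => (1 - cos R0 * cos s + cos s ^ 2) * csc s ^ 2 * cot_half_pow (cos R0) s).
  change (phi22 R0) with (fun s => (cos s ^ 2 - cos R0 * cos s - / 3 * sin R0 ^ 2) * csc s ^ 2 * cot_half_pow (cos R0) s).
  (* Both sides agree only modulo sin^2 + cos^2 = 1, at [R0] and at [s]. *)
  unfold csc. split; apply is_derive_Reals; auto_derive;
    try (repeat split; [lra | eexists; apply is_derive_cot_half_pow; exact Hs]);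
    rewrite DP; unfold A11, A12, A21, A22;
    apply (eq_of_pythagorean_defect R0 _ _ (cos s * cot_half_pow (cos R0) s / sin s ^ 3));
    apply (eq_of_pythagorean_defect s _ _ ((cos R0 - 2 * cos s) * cot_half_pow (cos R0) s / sin s ^ 3));
    field; lra.
Qed.

Lemma solution_diff_invariant (f1 f2 : R -> R) : is_solution R0 f1 f2 ->
  forall x y, 0 < x < PI -> 0 < y < PI ->
  (f1 x - f2 x) * sin x ^ 2 / cot_half_pow (cos R0) x
  = (f1 y - f2 y) * sin y ^ 2 / cot_half_pow (cos R0) y.
Proof.
  intros Hf. apply eq_of_is_derive_0_open.
  intros t Ht. pose proof (sin_gt_0_open t Ht) as Hsin.
  pose proof (cot_half_pow_gt_0 (cos R0) t) as HP.
  destruct (Hf t Ht) as [D1 D2].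
  apply is_derive_Reals in D1, D2.
  pose proof (is_derive_cot_half_pow (cos R0) t Ht) as DP.
  auto_derive.
  - repeat split; try (eexists; eassumption). lra.
  - rewrite (Derive_eta_of_is_derive _ _ _ D1), (Derive_eta_of_is_derive _ _ _ D2),
      (Derive_eta_of_is_derive _ _ _ DP).
    unfold A11, A12, A21, A22. field. lra.
Qed.

Lemma is_solution_diag_snd_const (h1 h2 : R -> R) : is_solution R0 h1 h2 ->
  (forall s, 0 < s < PI -> h1 s = h2 s) ->
  forall x y, 0 < x < PI -> 0 < y < PI -> h2 x = h2 y.
Proof.
  intros Hh Hdiag. apply eq_of_is_derive_0_open.
  intros t Ht. destruct (Hh t Ht) as [_ D2]. apply is_derive_Reals.
  replace 0 with (A21 R0 t * h1 t + A22 R0 t * h2 t); [exact D2 |].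
  rewrite (Hdiag t Ht). unfold A21, A22, Rdiv. ring.
Qed.

Definition ivp_coef (t0 y1 y2 : R) : R :=
  (y1 - y2) * sin t0 ^ 2 / ((1 + / 3 * sin R0 ^ 2) * cot_half_pow (cos R0) t0).

Definition ivp_sol1 (t0 y1 y2 s : R) : R :=
  y2 - ivp_coef t0 y1 y2 * phi22 R0 t0 + ivp_coef t0 y1 y2 * phi12 R0 s.

Definition ivp_sol2 (t0 y1 y2 s : R) : R :=
  y2 - ivp_coef t0 y1 y2 * phi22 R0 t0 + ivp_coef t0 y1 y2 * phi22 R0 s.

Lemma is_solution_ivp (t0 y1 y2 : R) :
  is_solution R0 (ivp_sol1 t0 y1 y2) (ivp_sol2 t0 y1 y2).
Proof.
  apply is_solution_add_scal; [apply is_solution_const | apply is_solution_phi2].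
Qed.

Lemma ivp_sol_init (t0 y1 y2 : R) : 0 < t0 < PI ->
  ivp_sol1 t0 y1 y2 t0 = y1 /\ ivp_sol2 t0 y1 y2 t0 = y2.
Proof.
  intros Ht0. pose proof (sin_gt_0_open t0 Ht0) as Hsin.
  pose proof (cot_half_pow_gt_0 (cos R0) t0) as HP.
  pose proof one_add_third_sin2_gt_0 as Hk.
  unfold ivp_sol1, ivp_sol2. split; [| ring].
  replace (phi12 R0 t0) with (phi22 R0 t0 + (phi12 R0 t0 - phi22 R0 t0)) by ring.
  rewrite phi12_sub_phi22. unfold ivp_coef, csc. field. lra.
Qed.

Lemma is_solution_ivp_unique (f1 f2 : R -> R) (t0 : R) : 0 < t0 < PI ->
  is_solution R0 f1 f2 ->
  forall s, 0 < s < PI -> f2 s = ivp_sol2 t0 (f1 t0) (f2 t0) s.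
Proof.
  intros Ht0 Hf s Hs.
  set (c := ivp_coef t0 (f1 t0) (f2 t0)).
  assert (Hdiag : forall t, 0 < t < PI ->
            f1 t + - c * phi12 R0 t = f2 t + - c * phi22 R0 t).
  { intros t Ht. pose proof (sin_gt_0_open t Ht) as Hsin.
    pose proof (cot_half_pow_gt_0 (cos R0) t) as HP.
    pose proof (cot_half_pow_gt_0 (cos R0) t0) as HP0.
    pose proof one_add_third_sin2_gt_0 as Hk.
    assert (Hdiff : f1 t - f2 t = (f1 t0 - f2 t0) * sin t0 ^ 2 / cot_half_pow (cos R0) t0
                                  * (cot_half_pow (cos R0) t / sin t ^ 2)).
    { rewrite <- (solution_diff_invariant f1 f2 Hf t t0 Ht Ht0). field. lra. }
    replace (f1 t) with (f2 t + (f1 t - f2 t)) by ring.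
    replace (phi12 R0 t) with (phi22 R0 t + (phi12 R0 t - phi22 R0 t)) by ring.
    rewrite Hdiff, phi12_sub_phi22. unfold c, ivp_coef, csc. field. lra. }
  pose proof (is_solution_add_scal _ _ _ _ (- c) Hf is_solution_phi2) as Hh.
  pose proof (is_solution_diag_snd_const _ _ Hh Hdiag s t0 Hs Ht0) as Hconst.
  unfold ivp_sol2. fold c. lra.
Qed.

End System.

Lemma ivp_sol2_h_formula (R0 s : R) : 0 < R0 < PI -> 0 < s < PI ->
  ivp_sol2 R0 R0 (cos R0 * 3 / sin R0 ^ 4) (cos R0 * 2 / sin R0 ^ 4) s * sin s ^ 3
  = h_formula R0 s.
Proof.
  intros HR Hs.
  pose proof (sin_gt_0_open R0 HR). pose proof (sin_gt_0_open s Hs).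
  pose proof (cot_half_pow_gt_0 (cos R0) R0).
  unfold h_formula, c_under, ivp_sol2, ivp_coef, phi22, csc.
  rewrite (cot_half_pow_div (cos R0) s R0 Hs HR).
  fold (cot_half_pow (cos R0) s) (cot_half_pow (cos R0) R0).
  field. repeat split; try lra. pose proof (pow2_ge_0 (sin R0)). lra.
Qed.

Theorem propositionA1 (R0 : R) (hR : 0 < R0 < PI / 2) :
  fundamental_matrix R0 /\
  (exists f1 f2 : R -> R, is_solution R0 f1 f2 /\
     f1 R0 * (sin R0)^4 = cos R0 * 3 /\ f2 R0 * (sin R0)^4 = cos R0 * 2) /\
  (forall f1 f2 : R -> R, is_solution R0 f1 f2 ->
     f1 R0 * (sin R0)^4 = cos R0 * 3 ->
     f2 R0 * (sin R0)^4 = cos R0 * 2 ->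
     forall s, 0 < s < PI -> f2 s * (sin s)^3 = h_formula R0 s).
Proof.
  assert (HR : 0 < R0 < PI) by lra.
  pose proof (sin_gt_0_open R0 HR) as Hsin.
  set (y1 := cos R0 * 3 / sin R0 ^ 4). set (y2 := cos R0 * 2 / sin R0 ^ 4).
  assert (Hy : forall y c, y * sin R0 ^ 4 = cos R0 * c <-> y = cos R0 * c / sin R0 ^ 4).
  { intros y c. split; intros H; [rewrite <- H | rewrite H]; field; lra. }
  split; [| split].
  - split; [exact (is_solution_const R0 1) |].
    split; [exact (is_solution_phi2 R0) | exact (det_phi_neq_0 R0)].
  - exists (ivp_sol1 R0 R0 y1 y2), (ivp_sol2 R0 R0 y1 y2).
    destruct (ivp_sol_init R0 R0 y1 y2 HR) as [-> ->].
    split; [apply is_solution_ivp | split; apply Hy; reflexivity].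
  - intros f1 f2 Hf H1 H2 s Hs.
    apply Hy in H1, H2.
    rewrite (is_solution_ivp_unique R0 f1 f2 R0 HR Hf s Hs), H1, H2.
    exact (ivp_sol2_h_formula R0 s HR Hs).
Qed.
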